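(* Let $N\ge 3$ and let $\mathcal{X}\in\mathbb{R}^{I_1\times\cdots\times I_N}$ be a tensor (noiseless) with TT rank $(R_0,R_1,\ldots,R_N)$, $R_0=R_N=1$, where $R_n=\operatorname{rank}(\mathbf{X}_{[1,\ldots,n;n+1,\ldots,N]})$ for $1\le n\le N-1$. Suppose $\mathcal{X}$ is observed only through a set of mode-$N$ fibers: there is a set $\Omega\subseteq[I_1]\times\cdots\times[I_{N-1}]$ such that the fibers $\mathcal{X}(i_1,\ldots,i_{N-1},:)$ are known exactly for $(i_1,\ldots,i_{N-1})\in\Omega$ and nothing else is known. Assume: (i)–(ii) for every $n\in\{1,\ldots,N-2\}$ there is a collection of observed submatrices $\mathbf{M}^{(n,l)}_{obs}=\mathbf{S}_r^{(n,l)}\tilde{\mathbf{X}}^{(n)}_{:p_l:}$, $l=1,\ldots,L_n$ (lateral slices $p_l$ of the reshaping $\tilde{\mathcal{X}}^{(n)}=\mathcal{X}_{[1,\ldots,n;n+1,\ldots,N-1;N]}$ restricted to their observed rows, with row index sets $\alpha_l\subseteq[I_1\cdots I_n]$), each of which is isorank, i.e. $\operatorname{rank}(\mathbf{M}^{(n,l)}_{obs})=R_n$, and such that the matrix $\mathbf{N}^{(n)}=[\mathbf{S}_r^{(n,1)\top}\mathbf{N}^{(n,1)}_{obs},\ldots,\mathbf{S}_r^{(n,L_n)\top}\mathbf{N}^{(n,L_n)}_{obs}]$ satisfies $\dim\ker(\mathbf{N}^{(n)\top})=R_n$, where the columns of $\mathbf{N}^{(n,l)}_{obs}\in\mathbb{R}^{|\alpha_l|\times(|\alpha_l|-R_n)}$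 form a basis of the orthogonal complement of the column space of $\mathbf{M}^{(n,l)}_{obs}$; (iii) for every $i\in\{1,\ldots,I_{N-1}\}$, letting $\mathbf{S}_r^{(i)}$ be the row selection matrix of the observed rows of the $i$-th lateral slice $\tilde{\mathbf{X}}_{:i:}\in\mathbb{R}^{(I_1\cdots I_{N-2})\times I_N}$ of $\tilde{\mathcal{X}}=\mathcal{X}_{[1,\ldots,N-2;N-1;N]}$, the matrix $\mathbf{S}_r^{(i)}\mathbf{U}$ has full column rank $R_{N-2}$, where $\mathbf{U}$ is any matrix whose columns form a basis of the column space of $\mathbf{X}_{[1,\ldots,N-2;N-1,N]}$; (iv) $\operatorname{rank}(\mathbf{S}_r\mathbf{X}_{[1,\ldots,N-1;N]})\ge R_{N-1}$, where $\mathbf{S}_r$ selects the rows of the $(N-1)$th unfolding corresponding to $\Omega$. Then the cores $\mathcal{G}^{(1)},\ldots,\mathcal{G}^{(N)}$ produced by the procedure described in the context are well defined (all linear systems have unique solutions) and satisfy $\mathcal{X}=\mathcal{G}^{(1)}\bullet\mathcal{G}^{(2)}\bullet\cdots\bullet\mathcal{G}^{(N)}$ exactly.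
   Context: TT decomposition: $\mathcal{X}=\mathcal{G}^{(1)}\bullet\cdots\bullet\mathcal{G}^{(N)}$ with cores $\mathcal{G}^{(n)}\in\mathbb{R}^{R_{n-1}\times I_n\times R_n}$, meaning $x_{i_1\cdots i_N}=\mathbf{G}^{(1)}_{:i_1:}\mathbf{G}^{(2)}_{:i_2:}\cdots\mathbf{G}^{(N)}_{:i_N:}$; $\bullet$ contracts the last mode of the left tensor with the first mode of the right one. $\mathbf{X}_{[1,\ldots,n;n+1,\ldots,N]}\in\mathbb{R}^{I_1\cdots I_n\times I_{n+1}\cdots I_N}$ is the unfolding whose rows are indexed by $(i_1,\ldots,i_n)$ and columns by $(i_{n+1},\ldots,i_N)$ (a fixed consistent ordering of multi-indices is used throughout); $\mathcal{X}_{[1,\ldots,n;n+1,\ldots,N-1;N]}$ is the third-order reshaping with modes indexed by $(i_1,\ldots,i_n)$, $(i_{n+1},\ldots,i_{N-1})$, $i_N$; its lateral slices are the matrices $\tilde{\mathbf{X}}_{:p:}$ obtained by fixing the middle index, so the $n$th unfolding is the horizontal concatenation of these slices. For a slice, a row $(i_1,\ldots,i_n)$ of $\tilde{\mathbf{X}}_{:p:}$ is observed iff the full index $(i_1,\ldots,i_{N-1})$ (with $(i_{n+1},\ldots,i_{N-1})$ given by $p$) lies in $\Omega$; a row selection matrix $\mathbf{S}_r\in\{0,1\}^{|\alpha|\times J}$ has rows $\mathbf{e}_j^\top$, $j\in\alpha$, so $\mathbf{S}_r^\top$ zero-pads. Procedure (TT mode-$N$ fiber-wise): (1) For $n=1,\ldots,N-2$: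 let $\mathbf{A}^{(n)}\in\mathbb{R}^{I_1\cdots I_n\times R_n}$ have orthonormal columns spanning $\ker(\mathbf{N}^{(n)\top})$ (subspace constraint method; equivalently, the first $R_n$ left singular vectors of $[\mathbf{Q}_{S_1},\ldots,\mathbf{Q}_{S_{L_n}}]$, where $\mathbf{Q}_{S_l}=[\mathbf{S}_r^{(n,l)\top}\mathbf{U}_l\ \ \tilde{\mathbf{S}}_r^{(n,l)\top}]$, $\mathbf{U}_l$ holds the top $R_n$ left singular vectors of $\mathbf{M}^{(n,l)}_{obs}$ and $\tilde{\mathbf{S}}_r^{(n,l)}$ selects the unobserved rows — subspace intersection method). (2) $\mathcal{G}^{(1)}=\mathbf{A}^{(1)}$ reshaped to $1\times I_1\times R_1$. (3) For $n=1,\ldots,N-3$: $\mathbf{W}^{(n)}=\mathbf{A}^{(n)\top}\mathbf{B}^{(n+1)}$, where $\mathbf{B}^{(n+1)}\in\mathbb{R}^{I_1\cdots I_n\times I_{n+1}R_{n+1}}$ is $\mathbf{A}^{(n+1)}$ reshaped so that rows are indexed by $(i_1,\ldots,i_n)$ and columns by $(i_{n+1},r)$; set $\mathcal{G}^{(n+1)}(r',i_{n+1},r)=\mathbf{W}^{(n)}(r',(i_{n+1},r))$. (4) Let $\mathbf{V}^{(N-1)}$ hold the top $R_{N-1}$ right singular vectors of $\mathbf{S}_r\mathbf{X}_{[1,\ldots,N-1;N]}$ and set $\mathcal{G}^{(N)}=\mathbf{V}^{(N-1)\top}$ reshaped to $R_{N-1}\times I_N\times 1$. (5) Let $\mathbf{G}^{(<N-1)}\in\mathbb{R}^{I_1\cdots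 I_{N-2}\times R_{N-2}}$ be the matrix form of $\mathcal{G}^{(1)}\bullet\cdots\bullet\mathcal{G}^{(N-2)}$ and $\mathbf{G}^{(N)}\in\mathbb{R}^{R_{N-1}\times I_N}$ the matrix form of $\mathcal{G}^{(N)}$; for each $i\in\{1,\ldots,I_{N-1}\}$ obtain the slice $\mathbf{G}^{(N-1)}_{:i:}\in\mathbb{R}^{R_{N-2}\times R_{N-1}}$ by solving $\mathbf{S}_r^{(i)}(\tilde{\mathbf{X}}_{:i:}\mathbf{G}^{(N)\top})=(\mathbf{S}_r^{(i)}\mathbf{G}^{(<N-1)})\mathbf{G}^{(N-1)}_{:i:}$. *)

From HB Require Import structures.
From mathcomp Require Import all_boot all_order all_algebra.
From mathcomp Require Import reals.
Set Implicit Arguments.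
Unset Strict Implicit.
Unset Printing Implicit Defensive.
Import Order.TTheory GRing.Theory Num.Theory.
Local Open Scope ring_scope.

(* Conventions: modes are 0-based in Rocq: mode k (0 <= k < N) is the
   paper's mode k+1, of size I k.  Multi-indices are encoded little-endian
   ("first index fastest"): (i_1,...,i_N) |-> \sum_k i_k * P k. *)

Definition P (I : nat -> nat) (n : nat) : nat := (\prod_(k < n) I k)%N.
Definition Q (I : nat -> nat) (N n : nat) : nat := (\prod_(n <= k < N) I k)%N.
(* product of sizes of modes n+1..N-1 (paper): middle mode of the
   third-order reshaping X_[1..n; n+1..N-1; N] *)
Definition Mid (I : nat -> nat) (N n : nat) : nat := (\prod_(n <= k < N.-1) I k)%N.

Definition flat (I : nat -> nat) (n : nat) (idx : nat -> nat) : nat :=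
  (\sum_(j < n) idx j * P I j)%N.
Definition digit (I : nat -> nat) (r j : nat) : nat := ((r %/ P I j) %% I j)%N.

(* nat-indexed access to a matrix entry (0 outside the range) *)
Definition mxn {R : nzRingType} {m n : nat} (M : 'M[R]_(m, n)) (i j : nat) : R :=
  match insub i, insub j with
  | Some i', Some j' => M i' j'
  | _, _ => 0
  end.

Definition tensor (R : Type) (I : nat -> nat) (N : nat) := 'I_(P I N) -> R.

Definition tget {R : nzRingType} {I N} (X : tensor R I N) (k : nat) : R :=
  match insub k with Some k' => X k' | None => 0 end.

Definition unfold {R : nzRingType} {I N} (X : tensor R I N) (n : nat)
  : 'M[R]_(P I n, Q I N n) :=
  \matrix_(i, j) tget X (i + P I n * j)%N.

Definition ttrank {R : fieldType} {I N} (X : tensor R I N) (n : nat) : nat :=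
  \rank (unfold X n).

(* lateral slice p of the reshaping X_[1..n; n+1..N-1; N]:
   rows (i_1..i_n), columns i_N (the column count Q I N N.-1 is the
   product over the single last mode, i.e. I_N) *)
Definition slice {R : nzRingType} {I N} (X : tensor R I N) (n p : nat)
  : 'M[R]_(P I n, Q I N N.-1) :=
  \matrix_(r, c) tget X (r + P I n * p + P I N.-1 * c)%N.

(* Omega is a set of (flat) indices (i_1,...,i_{N-1}).
   Observed rows of slice p at level n: rows r such that the full index
   (r, p) of the first N-1 modes lies in Omega. *)
Definition obs {I : nat -> nat} {N : nat} (Om : {set 'I_(P I N.-1)}) (n p : nat)
  : {set 'I_(P I n)} :=
  [set r : 'I_(P I n) | [exists x in Om, val x == (r + P I n * p)%N]].

Definition rowsel {R : nzRingType} {m : nat} (A : {set 'I_m}) : 'M[R]_(#|A|, m) :=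
  \matrix_(i, j) (enum_val i == j)%:R.

Definition Mobs {R : nzRingType} {I N} (X : tensor R I N) (Om : {set 'I_(P I N.-1)})
  (n p : nat) : 'M[R]_(#|obs Om n p|, Q I N N.-1) :=
  rowsel (obs Om n p) *m slice X n p.

Definition Nmat {R : nzRingType} {I N} (Om : {set 'I_(P I N.-1)}) (n : nat) (rn : nat)
  (ps : seq nat)
  (Nobs : forall p : nat, 'M[R]_(#|obs Om n p|, #|obs Om n p| - rn)) :=
  \mxrow_(l < size ps) ((rowsel (obs Om n (nth 0%N ps l)))^T *m Nobs (nth 0%N ps l)).

Definition top_rsv {R : realType} {m n : nat} (M : 'M[R]_(m, n)) (r : nat)
  (V : 'M[R]_(n, r)) : Prop :=
  (r <= n)%N /\
  exists (U : 'M[R]_m) (W : 'M[R]_n) (s : nat -> R),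
    U^T *m U = 1%:M /\ W^T *m W = 1%:M /\
    (forall k, 0 <= s k) /\ (forall k, s k.+1 <= s k) /\
    M = U *m (\matrix_(i < m, j < n) if (i == j :> nat) then s i else 0) *m W^T /\
    (forall (i : 'I_n) (j : 'I_r), V i j = mxn W i j).

(* Step (3): slice i of the core G^(n+1) (n >= 1): A^(n)^T B^(n+1) where
   B^(n+1)(r, (i, s)) = A^(n+1)((r, i), s). *)
Definition Gmid {R : nzRingType} {I : nat -> nat} {rk : nat -> nat}
  (A : forall n, 'M[R]_(P I n, rk n)) (n i : nat) : 'M[R]_(rk n, rk n.+1) :=
  (A n)^T *m \matrix_(r < P I n, s < rk n.+1) mxn (A n.+1) (r + P I n * i)%N s.

(* row vector G^(1)_{:d0:} G^(2)_{:d1:} ... G^(k+1)_{:dk:} *)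
Fixpoint pre {R : nzRingType} {I : nat -> nat} {rk : nat -> nat}
  (A : forall n, 'M[R]_(P I n, rk n)) (d : nat -> nat) (k : nat)
  : 'M[R]_(1, rk k.+1) :=
  match k with
  | 0 => \row_s mxn (A 1%N) (d 0%N) s
  | k'.+1 => pre A d k' *m Gmid A k'.+1 (d k'.+1)
  end.

(* G^(<N-1): matrix form of G^(1) . ... . G^(N-2), rows (i_1..i_{N-2}) *)
Definition Gpre {R : nzRingType} {I : nat -> nat} {rk : nat -> nat} (N : nat)
  (A : forall n, 'M[R]_(P I n, rk n)) : 'M[R]_(P I (N - 2)%N, rk (N - 2)%N) :=
  \matrix_(r, s) mxn (pre A (digit I r) (N - 3)%N) 0%N s.

Arguments mxn {R m n} M i j.
Arguments tget {R I N} X k.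
Arguments unfold {R I N} X n.
Arguments ttrank {R I N} X n.
Arguments slice {R I N} X n p.
Arguments obs {I N} Om n p.
Arguments rowsel {R m} A.
Arguments Mobs {R I N} X Om n p.
Arguments Nmat {R I N} Om n rn ps Nobs.
Arguments top_rsv {R m n} M r V.
Arguments Gmid {R I rk} A n i.
Arguments pre {R I rk} A d k.
Arguments Gpre {R I rk} N A.

(* For each level n <= N-2, an observed slice restricted to its observed rows
   has rank R_n, so its column space is the restriction of the column space of
   the n-th unfolding; hence that column space is annihilated by N^(n)^T, and
   the dimension hypothesis makes it exactly ker N^(n)^T = col A^(n).  Each
   reshaped block of A^(n+1) then lies in col A^(n), the products
   A^(n)^T B^(n+1) telescope, and G^(<N-1) = A^(N-2).  Since S_r X_[1..N-1;N]
   has rank R_{N-1}, its top right singular vectors V span the row space of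
   X_[1..N-1;N], so X_[1..N-1;N] V V^T = X_[1..N-1;N].  Finally S_r^(i) A^(N-2)
   has full column rank by (iii), so the i-th slice system has the unique
   solution A^(N-2)^T X_{:i:} V, and A A^T X_{:i:} V V^T = X_{:i:} gives back
   every entry. *)

From HB Require Import structures.
From mathcomp Require Import all_boot all_order all_algebra.
From mathcomp Require Import reals.
From mathcomp Require Import zify ring.
Set Implicit Arguments.
Unset Strict Implicit.
Unset Printing Implicit Defensive.
Import Order.TTheory GRing.Theory Num.Theory.
Local Open Scope ring_scope.

Section NatIndexedEntries.
Variables (R : nzRingType) (m n : nat).
Implicit Type M : 'M[R]_(m, n).

Lemma mxnE M i j (hi : (i < m)%N) (hj : (j < n)%N) :
  mxn M i j = M (Ordinal hi) (Ordinal hj).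
Proof.
rewrite /mxn; case: insubP => [i' _ ei|]; last by rewrite hi.
case: insubP => [j' _ ej|]; last by rewrite hj.
by congr (M _ _); apply: val_inj.
Qed.

Lemma mxn_ord M (i : 'I_m) (j : 'I_n) : mxn M i j = M i j.
Proof. by rewrite (mxnE M (ltn_ord i) (ltn_ord j)); congr (M _ _); apply: val_inj. Qed.

Lemma row_mxn M i (hi : (i < m)%N) : \row_s mxn M i s = row (Ordinal hi) M.
Proof. by apply/rowP => s; rewrite !mxE (mxnE M hi (ltn_ord s)); congr (M _ _); apply: val_inj. Qed.

Lemma col_mxn M j (hj : (j < n)%N) : \col_s mxn M s j = col (Ordinal hj) M.
Proof. by apply/colP => s; rewrite !mxE (mxnE M (ltn_ord s) hj); congr (M _ _); apply: val_inj. Qed.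

End NatIndexedEntries.

Lemma mul_row_col_mx (R : nzRingType) m n p (M : 'M[R]_(m, n)) (M' : 'M[R]_(n, p)) i j :
  (row i M *m col j M') 0 0 = (M *m M') i j.
Proof. by rewrite !mxE; apply: eq_bigr => k _; rewrite !mxE. Qed.

Section RankFacts.
Variable F : fieldType.

Lemma mxrank_mxsub m n m' n' (f : 'I_m' -> 'I_m) (g : 'I_n' -> 'I_n) (M : 'M[F]_(m, n)) :
  (\rank (mxsub f g M) <= \rank M)%N.
Proof.
have -> : mxsub f g M = rowsub f (colsub g M) by apply/matrixP => i j; rewrite !mxE.
apply: leq_trans (mxrankS (rowsub_sub _ _)) _.
by rewrite -mxrank_tr trmx_mxsub -[leqRHS]mxrank_tr mxrankS ?rowsub_sub.
Qed.

Lemma mulmx_sub_eqrank m1 m2 n p (A : 'M[F]_(m1, n)) (B : 'M[F]_(m2, n)) (S : 'M[F]_(n, p)) :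
  (B <= A)%MS -> \rank (B *m S) = \rank A -> (A *m S <= B *m S)%MS.
Proof.
move=> sBA rBS; have sBSA := submxMr S sBA.
rewrite -(mxrank_leqif_sup sBSA).2 eqn_leq mxrankS //= rBS.
exact: mxrankM_maxl.
Qed.

Lemma orthonormal_proj_id m r q (A : 'M[F]_(m, r)) (B : 'M[F]_(m, q)) :
  A^T *m A = 1%:M -> (B^T <= A^T)%MS -> A *m (A^T *m B) = B.
Proof.
move=> hA /submxP [D hD].
have -> : B = A *m D^T by rewrite -[B]trmxK hD trmx_mul trmxK.
by rewrite (mulmxA A^T) hA mul1mx.
Qed.

Lemma row_free_trmx_orthonormal m r (A : 'M[F]_(m, r)) :
  A^T *m A = 1%:M -> row_free A^T.
Proof.
move=> hA; rewrite -row_leq_rank; apply: leq_trans (mxrankM_maxl _ A).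
by rewrite hA mxrank1.
Qed.

End RankFacts.

Section RectangularDiagonal.
Variable R : numFieldType.

Definition rdiag_mx m n (s : nat -> R) : 'M[R]_(m, n) :=
  \matrix_(i, j) if i == j :> nat then s i else 0.

Lemma mul_rdiag_mxE m n p (s : nat -> R) (B : 'M[R]_(n, p)) i c :
  (rdiag_mx m n s *m B) i c = if (i < n)%N then s i * mxn B i c else 0.
Proof.
rewrite mxE (eq_bigr (fun b : 'I_n => if b == i :> nat then s i * mxn B b c else 0)).
  by rewrite -big_mkcond (big_ord1_eq _ (fun b => s i * mxn B b c)).
by move=> b _; rewrite mxE mxn_ord eq_sym; case: eqP => [<-|_]; rewrite ?mul0r.
Qed.

Lemma rdiag_mx_sv_eq0 m n r (s : nat -> R) :
  (forall k, 0 <= s k) -> (forall k, s k.+1 <= s k) ->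
  (\rank (rdiag_mx m n s) <= r)%N ->
  forall i, (r <= i)%N -> (i < m)%N -> (i < n)%N -> s i = 0.
Proof.
move=> s_ge0 s_noninc rk_le i le_ri lt_im lt_in.
have s_mono := Order.NatMonotonyTheory.nonincnP s_noninc.
have lt_rm : (r < m)%N := leq_ltn_trans le_ri lt_im.
have lt_rn : (r < n)%N := leq_ltn_trans le_ri lt_in.
suff sr0 : s r = 0.
  by apply/eqP; rewrite eq_le s_ge0 andbT -sr0 s_mono.
apply/eqP; apply: contraTT rk_le => sr_neq0; rewrite -ltnNge.
apply: leq_trans (mxrank_mxsub (widen_ord lt_rm) (widen_ord lt_rn) _).
have -> : mxsub (widen_ord lt_rm) (widen_ord lt_rn) (rdiag_mx m n s)
          = diag_mx (\row_(k < r.+1) s k).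
  by apply/matrixP => k l; rewrite !mxE /= val_eqE; case: eqP.
rewrite mxrank_unit // unitmxE det_diag unitfE; apply/prodf_neq0 => k _; rewrite mxE.
have s_gt0 : 0 < s r by rewrite lt_def sr_neq0 s_ge0.
by rewrite gt_eqF // (lt_le_trans s_gt0) //; apply: s_mono; apply: leq_ord.
Qed.

End RectangularDiagonal.

Section TopRightSingularVectors.
Variables (R : realType) (m n r : nat) (M : 'M[R]_(m, n)) (V : 'M[R]_(n, r)).
Hypothesis hV : top_rsv M r V.

Lemma top_rsv_orthonormal : V^T *m V = 1%:M.
Proof.
case: hV => le_rn [U [W [s [_ [hW [_ [_ [_ eV]]]]]]]].
have -> : V = colsub (widen_ord le_rn) W.
  apply/matrixP => i j; rewrite eV !mxE (mxnE W (ltn_ord i) (leq_trans (ltn_ord j) le_rn)).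
  by congr (W _ _); apply: val_inj.
by rewrite trmx_mxsub -mxsub_mul hW; apply/matrixP => i j; rewrite !mxE.
Qed.

Lemma top_rsv_rowspace : (\rank M <= r)%N -> (M <= V^T)%MS.
Proof.
case: hV => le_rn [U [W [s [hU [hW [s_ge0 [s_noninc [eM eV]]]]]]]] rk_le.
rewrite -/(rdiag_mx m n s) in eM.
have rank_D : (\rank (rdiag_mx m n s) <= r)%N.
  have -> : rdiag_mx m n s = U^T *m M *m W.
    by rewrite eM !mulmxA hU mul1mx -mulmxA hW mulmx1.
  exact: leq_trans (mxrankM_maxl _ _) (leq_trans (mxrankM_maxr _ _) rk_le).
have sv_eq0 := rdiag_mx_sv_eq0 s_ge0 s_noninc rank_D.
have -> : M = U *m rdiag_mx m r s *m V^T.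
  rewrite eM -!mulmxA; congr (U *m _); apply/matrixP => i c.
  rewrite !mul_rdiag_mxE; case: (ltnP i r) => [lt_ir|le_ri].
    rewrite (leq_trans lt_ir le_rn) (mxnE _ lt_ir (ltn_ord c)).
    rewrite (mxnE _ (leq_trans lt_ir le_rn) (ltn_ord c)) !mxE eV.
    by rewrite (mxnE W (ltn_ord c) (leq_trans lt_ir le_rn)).
  by case: ifP => // lt_in; rewrite sv_eq0 ?mul0r.
exact: submxMl.
Qed.

End TopRightSingularVectors.

Lemma top_rsv_mulVV (R : realType) m m' n r (S : 'M[R]_(m', m)) (M : 'M[R]_(m, n))
    (V : 'M[R]_(n, r)) :
  top_rsv (S *m M) r V -> \rank M = r -> (r <= \rank (S *m M))%N -> M *m V *m V^T = M.
Proof.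
move=> hV rank_M rank_le.
have rank_SM : \rank (S *m M) = r.
  by apply/eqP; rewrite eqn_leq rank_le -rank_M mxrankM_maxr.
have sub_M_SM : (M <= S *m M)%MS.
  by rewrite -(mxrank_leqif_sup (submxMl S M)).2 rank_SM rank_M.
have /submxP [C ->] := submx_trans sub_M_SM (top_rsv_rowspace hV (eq_leq rank_SM)).
by rewrite -!mulmxA (mulmxA V^T) (top_rsv_orthonormal hV) mul1mx.
Qed.

Section IndexArithmetic.
Variable I : nat -> nat.
Local Open Scope nat_scope.

Lemma P0 : P I 0 = 1.
Proof. by rewrite /P big_ord0. Qed.

Lemma PS n : P I n.+1 = P I n * I n.
Proof. by rewrite /P big_ord_recr. Qed.

Lemma P_gt0_I n j : 0 < P I n -> j < n -> 0 < I j.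
Proof. by move=> + lt_jn; rewrite /P (bigD1 (Ordinal lt_jn)) //= muln_gt0 => /andP[]. Qed.

Lemma PM_Mid N n : n <= N.-1 -> P I n * Mid I N n = P I N.-1.
Proof. by move=> le_n; rewrite /P /Mid -!(big_mkord xpredT) -big_cat_nat. Qed.

Lemma QS N n : n < N -> Q I N n = I n * Q I N n.+1.
Proof. by move=> lt_nN; rewrite /Q big_ltn. Qed.

Lemma Q_last N : 0 < N -> Q I N N.-1 = I N.-1.
Proof. by case: N => // N _; rewrite /Q /= big_nat1. Qed.

Lemma Q_Mid N n : 0 < N -> n <= N.-1 -> Q I N n = Mid I N n * I N.-1.
Proof.
by case: N => // N _ /= le_nN; rewrite /Q /Mid /= big_nat_recr.
Qed.

Lemma Mid_last n : Mid I n.+2 n = I n.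
Proof. by rewrite /Mid big_nat1. Qed.

Lemma row_block_lt n i (r : 'I_(P I n)) : i < I n -> r + P I n * i < P I n.+1.
Proof. by move=> lt_i; rewrite PS; have := ltn_ord r; nia. Qed.

Lemma flatS n d : flat I n.+1 d = flat I n d + d n * P I n.
Proof. by rewrite /flat big_ord_recr. Qed.

Lemma flat_lt n d : (forall j, j < n -> d j < I j) -> flat I n d < P I n.
Proof.
elim: n => [|n IH] lt_d; first by rewrite /flat big_ord0 P0.
have := IH (fun j lt_jn => lt_d j (ltnW lt_jn)); have := lt_d n (ltnSn n).
by rewrite flatS PS; nia.
Qed.

Lemma flat_digit n r : 0 < P I n -> flat I n (digit I r) = r %% P I n.
Proof.
elim: n => [|n IH]; first by rewrite /flat big_ord0 P0 modn1.
rewrite PS muln_gt0 => /andP[P_gt0 I_gt0]; rewrite flatS IH // /digit.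
set q := r %/ P I n.
have -> : r %% (P I n * I n) = (q %% I n) * P I n + r %% P I n.
  rewrite {1}(divn_eq r (P I n)) -/q {1}(divn_eq q (I n)).
  have := ltn_pmod r P_gt0; have := ltn_pmod q I_gt0.
  move: (q %/ I n) (q %% I n) (r %% P I n) => a b c lt_b lt_c.
  rewrite mulnDl -mulnA (mulnC (I n)) -addnA modnMDl modn_small //; nia.
by rewrite addnC.
Qed.

End IndexArithmetic.

Lemma row_block_mxn (R : nzRingType) I n i c (lt_i : (i < I n)%N) (M : 'M[R]_(P I n.+1, c)) :
  \matrix_(r < P I n, s < c) mxn M (r + P I n * i) s
  = rowsub (fun r => Ordinal (row_block_lt r lt_i)) M.
Proof.
apply/matrixP => r s; rewrite !mxE (mxnE _ (row_block_lt r lt_i) (ltn_ord s)).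
by congr (M _ _); apply: val_inj.
Qed.

Lemma flat_last2 I n d :
  flat I n.+2 d = (flat I n d + P I n * d n + P I n.+1 * d n.+1)%N.
Proof. by rewrite !flatS; ring. Qed.

Section Unfoldings.
Variables (R : fieldType) (I : nat -> nat) (N : nat) (X : tensor R I N).

Lemma slice_sub_unfold n p : (0 < N)%N -> (n <= N.-1)%N -> (p < Mid I N n)%N ->
  ((slice X n p)^T <= (unfold X n)^T)%MS.
Proof.
move=> N_gt0 le_n lt_p.
have lt_col (c : 'I_(Q I N N.-1)) : (p + Mid I N n * c < Q I N n)%N.
  have lt_c : (c < I N.-1)%N by rewrite -(Q_last I N_gt0) ltn_ord.
  by rewrite (Q_Mid I N_gt0 le_n); nia.
have -> : slice X n p = colsub (fun c => Ordinal (lt_col c)) (unfold X n).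
  apply/matrixP => r c; rewrite !mxE /=; congr (tget X _).
  by rewrite -(PM_Mid I le_n); ring.
by rewrite trmx_mxsub rowsub_sub.
Qed.

Lemma slice_sub_last_unfold n p : (n <= N.-1)%N -> (p < Mid I N n)%N ->
  (slice X n p <= unfold X N.-1)%MS.
Proof.
move=> le_n lt_p.
have lt_row (r : 'I_(P I n)) : (r + P I n * p < P I N.-1)%N.
  by rewrite -(PM_Mid I le_n); have := ltn_ord r; nia.
have -> : slice X n p = rowsub (fun r => Ordinal (lt_row r)) (unfold X N.-1).
  by apply/matrixP => r c; rewrite !mxE.
exact: rowsub_sub.
Qed.

Lemma row_block_sub_unfold n i c (lt_i : (i < I n)%N) (B : 'M[R]_(P I n.+1, c)) :
  (n < N)%N -> (B^T <= (unfold X n.+1)^T)%MS ->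
  ((rowsub (fun r => Ordinal (row_block_lt r lt_i)) B)^T <= (unfold X n)^T)%MS.
Proof.
move=> lt_n /submxP [D eB]; rewrite -[B]trmxK eB trmx_mul trmxK -mul_rowsub_mx.
rewrite trmx_mul; apply: submx_trans (submxMl _ _) _.
have lt_col (j : 'I_(Q I N n.+1)) : (i + I n * j < Q I N n)%N.
  by rewrite (QS I lt_n); have := ltn_ord j; nia.
have -> : rowsub (fun r => Ordinal (row_block_lt r lt_i)) (unfold X n.+1)
          = colsub (fun j => Ordinal (lt_col j)) (unfold X n).
  by apply/matrixP => r j; rewrite !mxE /=; congr (tget X _); rewrite PS; ring.
by rewrite trmx_mxsub rowsub_sub.
Qed.

End Unfoldings.

Section SubspaceConstraint.
Variables (R : fieldType) (I : nat -> nat) (N : nat) (X : tensor R I N).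
Variables (Om : {set 'I_(P I N.-1)}) (n : nat) (ps : seq nat).
Variable Nobs : forall p : nat, 'M[R]_(#|obs Om n p|, #|obs Om n p| - ttrank X n).
Hypotheses (N_gt0 : (0 < N)%N) (le_n : (n <= N.-1)%N).
Hypothesis lt_ps : all (fun p => p < Mid I N n)%N ps.
Hypothesis rank_Mobs : forall p, p \in ps -> \rank (Mobs X Om n p) = ttrank X n.
Hypothesis Nobs_ker : forall p, p \in ps -> ((Nobs p)^T <= kermx (Mobs X Om n p))%MS.

Lemma unfold_sub_kermx_Nmat : ((unfold X n)^T <= kermx (Nmat Om n (ttrank X n) ps Nobs))%MS.
Proof.
apply/sub_kermxP; rewrite /Nmat mul_mxrow -mxrow0; apply: eq_mxrow => l.
set p := nth 0%N ps l; have ps_p : p \in ps by apply: mem_nth.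
have lt_p : (p < Mid I N n)%N by move/allP: lt_ps => /(_ p ps_p).
have /submxP [D eD] : ((unfold X n)^T *m (rowsel (obs Om n p))^T <= (Mobs X Om n p)^T)%MS.
  rewrite /Mobs trmx_mul; apply: mulmx_sub_eqrank (slice_sub_unfold X N_gt0 le_n lt_p) _.
  by rewrite -trmx_mul mxrank_tr rank_Mobs // mxrank_tr.
have Mobs_Nobs : (Mobs X Om n p)^T *m Nobs p = 0.
  by rewrite -[Nobs p]trmxK -trmx_mul (sub_kermxP (Nobs_ker ps_p)) trmx0.
by rewrite mulmxA eD -mulmxA Mobs_Nobs mulmx0.
Qed.

Lemma kermx_Nmat_eq_unfold :
  \rank (kermx (Nmat Om n (ttrank X n) ps Nobs)) = ttrank X n ->
  (kermx (Nmat Om n (ttrank X n) ps Nobs) :=: (unfold X n)^T)%MS.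
Proof.
move=> rank_ker; apply/eqmxP; rewrite unfold_sub_kermx_Nmat andbT.
by rewrite -(mxrank_leqif_sup unfold_sub_kermx_Nmat).2 rank_ker mxrank_tr.
Qed.

End SubspaceConstraint.

Section CoreTelescoping.
Variables (R : fieldType) (I rk : nat -> nat) (A : forall n, 'M[R]_(P I n, rk n)) (K : nat).
Hypothesis A_orth : forall n, (1 <= n <= K.+1)%N -> (A n)^T *m A n = 1%:M.
Hypothesis row_block_sub : forall n i (lt_i : (i < I n)%N), (1 <= n <= K)%N ->
  ((rowsub (fun r => Ordinal (row_block_lt r lt_i)) (A n.+1))^T <= (A n)^T)%MS.

Lemma pre_row_flat k d : (k <= K)%N -> (forall j, (j <= k)%N -> (d j < I j)%N) ->
  pre A d k = \row_s mxn (A k.+1) (flat I k.+1 d) s.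
Proof.
elim: k => [|k IH] le_k lt_d; first by rewrite /= flatS /flat big_ord0 P0 muln1.
have lt_flat : (flat I k.+1 d < P I k.+1)%N.
  by apply: flat_lt => j lt_j; apply: lt_d; apply: ltnW.
have lt_dk : (d k.+1 < I k.+1)%N := lt_d _ (leqnn _).
rewrite /= (IH (ltnW le_k)) => [|j le_j]; last exact/lt_d/leqW.
rewrite (row_mxn _ lt_flat) -row_mul /Gmid (row_block_mxn lt_dk).
rewrite orthonormal_proj_id ?A_orth ?row_block_sub //; last by rewrite /= ltnW.
apply/rowP => s; rewrite !mxE [in RHS]flatS [in RHS]mulnC.
rewrite (mxnE _ (row_block_lt (Ordinal lt_flat) lt_dk) (ltn_ord s)).
by congr (A _ _ _); apply: val_inj.
Qed.

Lemma Gpre_telescope : Gpre K.+3 A = A K.+1.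
Proof.
apply/matrixP => r s; rewrite mxE.
have P_gt0 : (0 < P I K.+1)%N := leq_ltn_trans (leq0n _) (ltn_ord r).
have -> : (K.+3 - 3 = K)%N by lia.
rewrite pre_row_flat // => [|j le_j]; last first.
  by rewrite /digit ltn_pmod // (P_gt0_I P_gt0).
rewrite (mxnE _ (ltn0Sn 0) (ltn_ord s)) mxE flat_digit // modn_small //.
by rewrite mxn_ord; congr (A _ _ _); apply: val_inj.
Qed.

End CoreTelescoping.

Section FiberCompletion.
Variables (R : realType) (K : nat) (I : nat -> nat) (X : tensor R I K.+3).
(* [(K.+3).-1] rather than [K.+2], so that [obs Om] infers N = K.+3. *)
Variables (Om : {set 'I_(P I (K.+3).-1)}) (A : forall n, 'M[R]_(P I n, ttrank X n)).
Variable V : 'M[R]_(Q I K.+3 K.+2, ttrank X K.+2).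
Hypothesis A_orth : forall n, (1 <= n <= K.+1)%N -> (A n)^T *m A n = 1%:M.
Hypothesis A_col : forall n, (1 <= n <= K.+1)%N -> ((A n)^T :=: (unfold X n)^T)%MS.
Hypothesis unfold_VV : unfold X K.+2 *m V *m V^T = unfold X K.+2.

Lemma Gpre_eq_A : Gpre K.+3 A = A K.+1.
Proof.
apply: Gpre_telescope A_orth _ => n i lt_i /andP[n_gt0 le_nK].
rewrite (A_col (n := n)) ?n_gt0 ?(leqW le_nK) //.
by apply: row_block_sub_unfold; rewrite ?A_col ?n_gt0 ?ltnS ?leqW.
Qed.

Lemma A_proj_slice i : (i < I K.+1)%N ->
  A K.+1 *m ((A K.+1)^T *m slice X K.+1 i) = slice X K.+1 i.
Proof.
move=> lt_i; apply: orthonormal_proj_id; first by rewrite A_orth ?leqnn.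
by rewrite A_col ?leqnn //; apply: slice_sub_unfold; rewrite ?Mid_last.
Qed.

Lemma slice_mulVV i : (i < I K.+1)%N -> slice X K.+1 i *m V *m V^T = slice X K.+1 i.
Proof.
move=> lt_i; have /submxP [C ->] : (slice X K.+1 i <= unfold X K.+2)%MS.
  by apply: (slice_sub_last_unfold X (n := K.+1)); rewrite ?Mid_last.
by rewrite -!mulmxA (mulmxA _ V) unfold_VV.
Qed.

Lemma slice_system_solution i Y : (i < I K.+1)%N ->
  row_free (rowsel (obs Om K.+1 i) *m A K.+1)^T ->
  rowsel (obs Om K.+1 i) *m (slice X K.+1 i *m V)
    = (rowsel (obs Om K.+1 i) *m Gpre K.+3 A) *m Y
  <-> Y = (A K.+1)^T *m (slice X K.+1 i *m V).
Proof.
move=> lt_i free.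
have proj : A K.+1 *m ((A K.+1)^T *m (slice X K.+1 i *m V)) = slice X K.+1 i *m V.
  by rewrite !mulmxA -(mulmxA (A K.+1)) A_proj_slice.
rewrite Gpre_eq_A; split => [eq_sys | ->]; last by rewrite -mulmxA proj.
apply: trmx_inj; apply: (row_free_inj free).
by rewrite -!trmx_mul -eq_sys -mulmxA proj.
Qed.

End FiberCompletion.

Unset Implicit Arguments.
Theorem mainTheorem1 (R : realType) (N : nat) (hN : (3 <= N)%N)
  (I : nat -> nat) (X : tensor R I N) (Om : {set 'I_(P I N.-1)})
  (* the collections of slices p_1, ..., p_{L_n} used at level n *)
  (ps : nat -> seq nat)
  (* bases N_obs^(n,l) of the orthogonal complements *)
  (Nobs : forall n p : nat, 'M[R]_(#|obs Om n p|, #|obs Om n p| - ttrank X n))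
  (* choices made by the procedure: A^(n) (step 1) and V^(N-1) (step 4) *)
  (A : forall n : nat, 'M[R]_(P I n, ttrank X n))
  (V : 'M[R]_(Q I N N.-1, ttrank X N.-1)) :
  (* (i)-(ii) *)
  (forall n, (1 <= n <= N - 2)%N -> all (fun p => (p < Mid I N n)%N) (ps n)) ->
  (forall n, (1 <= n <= N - 2)%N -> forall p, p \in ps n ->
     \rank (Mobs X Om n p) = ttrank X n) ->
  (forall n, (1 <= n <= N - 2)%N -> forall p, p \in ps n ->
     ((Nobs n p)^T == kermx (Mobs X Om n p))%MS /\ row_free (Nobs n p)^T) ->
  (forall n, (1 <= n <= N - 2)%N ->
     \rank (kermx (Nmat Om n (ttrank X n) (ps n) (Nobs n))) = ttrank X n) ->
  (* (iii) *)
  (forall i, (i < I (N - 2)%N)%N ->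
     forall U : 'M[R]_(P I (N - 2)%N, ttrank X (N - 2)%N),
       ((U^T == (unfold X (N - 2)%N)^T)%MS /\ row_free U^T) ->
       \rank (rowsel (obs Om (N - 2)%N i) *m U) = ttrank X (N - 2)%N) ->
  (* (iv) *)
  (ttrank X N.-1 <= \rank (rowsel Om *m unfold X N.-1))%N ->
  (* step (1): A^(n) has orthonormal columns spanning ker(N^(n)^T) *)
  (forall n, (1 <= n <= N - 2)%N ->
     (A n)^T *m A n = 1%:M /\
     ((A n)^T == kermx (Nmat Om n (ttrank X n) (ps n) (Nobs n)))%MS) ->
  (* step (4): V^(N-1) = top right singular vectors of S_r X_[1..N-1;N] *)
  top_rsv (rowsel Om *m unfold X N.-1) (ttrank X N.-1) V ->
  (* step (5): each linear system has a unique solution ... *)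
  (forall i, (i < I (N - 2)%N)%N ->
     exists! Y : 'M[R]_(ttrank X (N - 2)%N, ttrank X N.-1),
       rowsel (obs Om (N - 2)%N i) *m (slice X (N - 2)%N i *m V)
       = (rowsel (obs Om (N - 2)%N i) *m Gpre N A) *m Y) /\
  (* ... and the resulting cores reproduce X exactly *)
  (forall Gl : nat -> 'M[R]_(ttrank X (N - 2)%N, ttrank X N.-1),
     (forall i, (i < I (N - 2)%N)%N ->
        rowsel (obs Om (N - 2)%N i) *m (slice X (N - 2)%N i *m V)
        = (rowsel (obs Om (N - 2)%N i) *m Gpre N A) *m Gl i) ->
     forall idx : nat -> nat, (forall j, (j < N)%N -> (idx j < I j)%N) ->
       tget X (flat I N idx)
       = ((\row_s mxn (Gpre N A) (flat I (N - 2)%N idx) s)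
            *m Gl (idx (N - 2)%N)
            *m (\col_b mxn V^T b (idx N.-1))) ord0 ord0).
Proof.
move=> lt_ps rank_Mobs Nobs_ker rank_ker obs_free rank_obs A_ker V_rsv.
have [K eN] : exists K, N = K.+3 by exists (N - 3)%N; lia.
subst N.
have A_orth n hn := (A_ker n hn).1.
have A_col n (hn : (1 <= n <= K.+1)%N) : ((A n)^T :=: (unfold X n)^T)%MS.
  have Nobs_sub p (hp : p \in ps n) : ((Nobs n p)^T <= kermx (Mobs X Om n p))%MS.
    by case/andP: (Nobs_ker n hn p hp).1.
  apply: eqmx_trans (eqmxP (A_ker n hn).2) _.
  have le_n : (n <= K.+2)%N by case/andP: hn => _ /leqW.
  exact: kermx_Nmat_eq_unfold (ltn0Sn _) le_n (lt_ps n hn) (rank_Mobs n hn) Nobs_sub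
    (rank_ker n hn).
have obs_A_free i (lt_i : (i < I K.+1)%N) : row_free (rowsel (obs Om K.+1 i) *m A K.+1)^T.
  rewrite /row_free mxrank_tr (obs_free i lt_i) //.
  by split; [apply/eqmxP/A_col | apply/row_free_trmx_orthonormal/A_orth]; rewrite leqnn.
have unfold_VV := top_rsv_mulVV V_rsv erefl rank_obs.
have sol i Y lt_i := slice_system_solution V A_orth A_col Y lt_i (obs_A_free i lt_i).
split => [i lt_i | Gl Gl_sol idx lt_idx].
  by exists ((A K.+1)^T *m (slice X K.+1 i *m V)); split => [|Y /sol ->]; rewrite ?sol.
have lt_flat : (flat I K.+1 idx < P I K.+1)%N by apply: flat_lt => j lt_j; apply: lt_idx; lia.
have lt_last : (idx K.+2 < Q I K.+3 K.+2)%N by rewrite (Q_last I (ltn0Sn _)) lt_idx.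
have lt_mid : (idx K.+1 < I K.+1)%N := lt_idx K.+1 (leqnSn _).
rewrite [Gl _](sol _ _ lt_mid).1 ?Gl_sol //.
rewrite (Gpre_eq_A A_orth A_col) (row_mxn _ lt_flat) (col_mxn _ lt_last) -row_mul mul_row_col_mx.
by rewrite !mulmxA -(mulmxA (A K.+1)) A_proj_slice ?slice_mulVV ?lt_idx // mxE flat_last2.
Qed.
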